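(* Let $P=\langle \mathit{Init}(X),\mathit{Tr}(X,X'),\mathit{Bad}(X)\rangle$ be a safety problem over $\mathcal{T}$, and suppose the Quic3 rules are applied to $P$ in any order starting from the initial state. Then in every step of Quic3, for every $k<N$, the sequence $\forall Q_1,\dots,\forall Q_k$ is an interpolation sequence of length $k$ for $P$.
   Context: $\mathcal{T}$ is the combined first-order theory of linear integer arithmetic and arrays, with sorts $\mathsf{int}$ and $\mathsf{array}$ (array indices and values have sort $\mathsf{int}$; $\mathsf{sel}$, $\mathit{store}$ are array read/write). Formulas may contain uninterpreted constants; among them are Skolem constants $\mathit{SK}=\{sk_i: i\in\mathbb{N}\}$ of sort $\mathsf{int}$. Variables of sort $\mathsf{int}$ are named $v_i$. A substitution is a partial sort-respecting map from variables to terms; $\varphi\sigma$ is its application; $\emptyset$ is the empty substitution. The Skolem substitution $\mathit{sk}$ maps $v_i\mapsto sk_i$; $L_{\mathit{sk}}$ denotes $L\,\mathit{sk}$. $\mathit{Const}(\varphi)$, $\mathit{FVars}(\varphi)$ denote uninterpreted constants and free variables; $\forall\varphi$ / $\exists\varphi$ are universal / existential closures over all free variables; $\varphi\Rightarrow\psi$ means $\varphi\to\psi$ is valid in $\mathcal{T}$. For a set $U$ of constants and formula $\varphi$, $\mathit{abs}(U,\varphi)=(\psi,\sigma)$: $\psi$ is obtained from $\varphi$ by replacing each constant of $U$ by a variable not free in $\varphi$, each $sk_i\in U$ being replaced by $v_i$; $\mathit{dom}(\sigma)=\mathit{FVars}(\psi)\setminus\mathit{FVars}(\varphi)$, $\psi\sigma=\varphi$,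 and no constant of $U$ occurs in $\psi$. For ground $\varphi$, $\exists U\cdot\varphi$ denotes $\exists\psi$ with $(\psi,\_)=\mathit{abs}(U,\varphi)$. A partial model-based projection $\textsc{pMbp}(U,\varphi,M)=(\psi,W)$ (for ground $\varphi$, $M\models\varphi$, $U\subseteq\mathit{Const}(\varphi)$) satisfies: $\psi$ is a conjunction of ground literals; $W\subseteq U$, $\mathit{Const}(\psi)\subseteq\mathit{Const}(\varphi)\setminus(U\setminus W)$; $\psi\Rightarrow\exists(U\setminus W)\cdot\varphi$; $M\models\psi$; for fixed $U,\varphi$ only finitely many values arise over all models $M$; $W$ contains no array constant. For ground $A,B$ with $A\wedge B$ unsatisfiable, $\textsc{Itp}(A,B)$ is an interpolant: a ground formula $I$ with $\mathit{Const}(I)\subseteq\mathit{Const}(A)\cap\mathit{Const}(B)$, $A\Rightarrow I$ and $I\Rightarrow\neg B$. A safety problem $\langle \mathit{Init}(X),\mathit{Tr}(X,X'),\mathit{Bad}(X)\rangle$ has a finite set $X$ of constants disjoint from $\mathit{SK}$, primed copy $X'=\{a'\mid a\in X\}$, and quantifier-free ground $\mathit{Init},\mathit{Bad}$ over $X$ and $\mathit{Tr}$ over $X\cup X'$. $\varphi'$ replaces each $a\in X$ by $a'$ in $\varphi$, and for $L'$ a formula over $X'\cup\mathit{SK}$, $L$ denotes its unprimed version. $\mathcal{F}(A)=(A(X)\wedge\mathit{Tr}(X,X'))\vee\mathit{Init}(X')$. An interpolation sequence of length $k$ for $P$ is a sequence of formulas $I_1(X),\dots,I_k(X)$ with $\mathit{Init}(X)\Rightarrow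 I_1(X)$, $I_j(X)\wedge\mathit{Tr}(X,X')\Rightarrow I_{j+1}(X')$ for $1\le j\le k-1$, and $I_k(X)\Rightarrow\neg\mathit{Bad}(X)$. A frame $Q$ is a finite set of pairs $(\ell,\sigma)$, $\ell$ quantifier-free over $X$ with free variables of sort $\mathsf{int}$, $\sigma$ a substitution with $\mathit{FVars}(\ell)\subseteq\mathit{dom}(\sigma)$ and range in $X'\cup\mathit{SK}$; $\forall Q$ is the set (read as conjunction) of $\forall\ell$ and $\mathit{qi}(Q)$ the conjunction of $\ell\sigma$ over $(\ell,\sigma)\in Q$. A proof obligation (POB) is $\langle m,\sigma,i\rangle$ with $m$ a conjunction of literals over $X$ with free $\mathsf{int}$ variables, $m\sigma$ ground, $i\in\mathbb N$. Quic3 maintains a POB queue $\mathcal Q$, a level $N$ and frames $Q_0,Q_1,\dots$; initially $\mathcal Q=\emptyset$, $N=0$, $Q_0=\{(\mathit{Init},\emptyset)\}$, $Q_i=\emptyset$ for $i>0$. It applies, in any order, the rules: (Safe) if some $i<N$ has $\forall Q_i\subseteq\forall Q_{i+1}$, return Safe; (Cex) if some $\langle m,\sigma,0\rangle\in\mathcal Q$, return Cex; (Unfold) if $\mathit{qi}(Q_N)\Rightarrow\neg\mathit{Bad}$, set $N\gets N+1$; (Candidate) if $m$ is a monomial with $m\Rightarrow\mathit{qi}(Q_N)\wedge\mathit{Bad}$, add $\langle m,\emptyset,N\rangle$ to $\mathcal Q$; (Predecessor) if $\langle m,\xi,i+1\rangle\in\mathcal Q$ and $M\models\mathit{qi}(Q_i)\wedge\mathit{Tr}\wedge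 m'_{\mathit{sk}}$, add $\langle\psi,\sigma,i\rangle$ where $(\psi,\sigma)=\mathit{abs}(U,\varphi)$ and $(\varphi,U)=\textsc{pMbp}(X'\cup\mathit{SK},\mathit{Tr}\wedge m'_{\mathit{sk}},M)$; (NewLemma) for $0\le i<N$ and $\langle m,\sigma,i+1\rangle\in\mathcal Q$ with $\mathcal F(\mathit{qi}(Q_i))\wedge m'_{\mathit{sk}}$ unsatisfiable, let $L'=\textsc{Itp}(\mathcal F(\mathit{qi}(Q_i)),m'_{\mathit{sk}})$ and $(\ell,\_)=\mathit{abs}(\mathit{SK},L)$, and add $(\ell,\sigma)$ to $Q_j$ for all $j\le i+1$; (Push) for $0\le i<N$ and $((\varphi\vee\psi),\sigma)\in Q_i$, if $(\varphi,\sigma)\notin Q_{i+1}$, $\mathit{Init}\Rightarrow\forall\varphi$ and $(\forall\varphi)\wedge\forall Q_i\wedge\mathit{qi}(Q_i)\wedge\mathit{Tr}\Rightarrow\forall\varphi'$, add $(\varphi,\sigma)$ to $Q_j$ for all $j\le i+1$. *)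

From Stdlib Require Import ZArith List Bool Arith Relations.
Import ListNotations.

(* A state constant a in X
   is an unprimed one; its primed copy a' has the same name, primed.    *)
Inductive icnst : Type := Sk (i : nat) | IC (primed : bool) (n : nat).
Inductive acnst : Type := AC (primed : bool) (n : nat).
Inductive cnst : Type := CI (c : icnst) | CA (c : acnst).

Definition cnst_eq_dec : forall x y : cnst, {x = y} + {x <> y}.
Proof. repeat decide equality. Defined.

Inductive iterm : Type :=
| IVar (i : nat)
| ICst (c : icnst)
| INum (z : Z)
| IAdd (t1 t2 : iterm)
| IMul (z : Z) (t : iterm)
| ISel (a : aterm) (t : iterm)
with aterm : Type :=
| ACst (c : acnst)
| AStore (a : aterm) (i v : iterm).

Inductive atom : Type :=
| ALe (t1 t2 : iterm)
| AIEq (t1 t2 : iterm)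
| AAEq (a1 a2 : aterm).

Inductive formula : Type :=
| FTrue | FFalse
| FAtom (a : atom)
| FNot (f : formula)
| FAnd (f g : formula)
| FOr (f g : formula)
| FImp (f g : formula)
| FAll (i : nat) (f : formula)
| FEx (i : nat) (f : formula).

Record model : Type := { mint : icnst -> Z; marr : acnst -> (Z -> Z) }.
Definition valuation := nat -> Z.
Definition upd (r : valuation) (i : nat) (z : Z) : valuation :=
  fun j => if Nat.eqb j i then z else r j.

Fixpoint ieval (M : model) (r : valuation) (t : iterm) : Z :=
  match t with
  | IVar i => r i
  | ICst c => mint M c
  | INum z => z
  | IAdd a b => (ieval M r a + ieval M r b)%Z
  | IMul z a => (z * ieval M r a)%Z
  | ISel a u => aeval M r a (ieval M r u)
  end
with aeval (M : model) (r : valuation) (a : aterm) : Z -> Z :=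
  match a with
  | ACst c => marr M c
  | AStore b i v =>
      fun j => if Z.eqb j (ieval M r i) then ieval M r v else aeval M r b j
  end.

Definition atom_sat (M : model) (r : valuation) (a : atom) : Prop :=
  match a with
  | ALe t1 t2 => (ieval M r t1 <= ieval M r t2)%Z
  | AIEq t1 t2 => ieval M r t1 = ieval M r t2
  | AAEq a1 a2 => forall j, aeval M r a1 j = aeval M r a2 j
  end.

Fixpoint sat (M : model) (r : valuation) (f : formula) : Prop :=
  match f with
  | FTrue => True
  | FFalse => False
  | FAtom a => atom_sat M r a
  | FNot g => ~ sat M r g
  | FAnd g h => sat M r g /\ sat M r h
  | FOr g h => sat M r g \/ sat M r h
  | FImp g h => sat M r g -> sat M r h
  | FAll i g => forall z, sat M (upd r i z) g
  | FEx i g => exists z, sat M (upd r i z) g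
  end.

Definition models (M : model) (f : formula) : Prop := forall r, sat M r f.
Definition implies (f g : formula) : Prop :=
  forall M r, sat M r f -> sat M r g.
Definition unsatisfiable (f : formula) : Prop := forall M r, ~ sat M r f.

Fixpoint ivars (t : iterm) : list nat :=
  match t with
  | IVar i => [i]
  | ICst _ | INum _ => []
  | IAdd a b => ivars a ++ ivars b
  | IMul _ a => ivars a
  | ISel a u => avars a ++ ivars u
  end
with avars (a : aterm) : list nat :=
  match a with
  | ACst _ => []
  | AStore b i v => avars b ++ ivars i ++ ivars v
  end.

Definition atom_vars (a : atom) : list nat :=
  match a with
  | ALe t1 t2 | AIEq t1 t2 => ivars t1 ++ ivars t2
  | AAEq a1 a2 => avars a1 ++ avars a2
  end.

Fixpoint fvars (f : formula) : list nat :=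
  match f with
  | FTrue | FFalse => []
  | FAtom a => atom_vars a
  | FNot g => fvars g
  | FAnd g h | FOr g h | FImp g h => fvars g ++ fvars h
  | FAll i g | FEx i g => remove Nat.eq_dec i (fvars g)
  end.

Fixpoint iconsts (t : iterm) : list cnst :=
  match t with
  | IVar _ | INum _ => []
  | ICst c => [CI c]
  | IAdd a b => iconsts a ++ iconsts b
  | IMul _ a => iconsts a
  | ISel a u => aconsts a ++ iconsts u
  end
with aconsts (a : aterm) : list cnst :=
  match a with
  | ACst c => [CA c]
  | AStore b i v => aconsts b ++ iconsts i ++ iconsts v
  end.

Definition atom_consts (a : atom) : list cnst :=
  match a with
  | ALe t1 t2 | AIEq t1 t2 => iconsts t1 ++ iconsts t2
  | AAEq a1 a2 => aconsts a1 ++ aconsts a2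
  end.

Fixpoint consts (f : formula) : list cnst :=
  match f with
  | FTrue | FFalse => []
  | FAtom a => atom_consts a
  | FNot g | FAll _ g | FEx _ g => consts g
  | FAnd g h | FOr g h | FImp g h => consts g ++ consts h
  end.

Fixpoint qfree (f : formula) : Prop :=
  match f with
  | FTrue | FFalse | FAtom _ => True
  | FNot g => qfree g
  | FAnd g h | FOr g h | FImp g h => qfree g /\ qfree h
  | FAll _ _ | FEx _ _ => False
  end.

Definition ground (f : formula) : Prop := qfree f /\ fvars f = [].

Definition is_literal (f : formula) : Prop :=
  match f with
  | FAtom _ => True
  | FNot (FAtom _) => True
  | _ => False
  end.

Fixpoint is_monomial (f : formula) : Prop :=
  match f with
  | FTrue => True
  | FAnd g h => is_monomial g /\ is_monomial h
  | _ => is_literal f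
  end.

Definition is_sk (c : cnst) : Prop := exists i, c = CI (Sk i).
Definition is_int_cnst (c : cnst) : Prop := exists c', c = CI c'.

Definition uclose (f : formula) : formula := fold_right FAll f (fvars f).

(* Substitutions: partial, sort-respecting maps from (int) variables to
   (int) constants -- all substitutions of the calculus have range in
   X' u SK.                                                            *)
Definition subst := nat -> option icnst.
Definition empty_subst : subst := fun _ => None.
Definition sk_subst : subst := fun i => Some (Sk i).
Definition subst_remove (s : subst) (i : nat) : subst :=
  fun j => if Nat.eqb j i then None else s j.

Fixpoint isubst (s : subst) (t : iterm) : iterm :=
  match t with
  | IVar i => match s i with Some c => ICst c | None => IVar i end
  | ICst c => ICst c
  | INum z => INum z
  | IAdd a b => IAdd (isubst s a) (isubst s b)
  | IMul z a => IMul z (isubst s a)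
  | ISel a u => ISel (asubst s a) (isubst s u)
  end
with asubst (s : subst) (a : aterm) : aterm :=
  match a with
  | ACst c => ACst c
  | AStore b i v => AStore (asubst s b) (isubst s i) (isubst s v)
  end.

Definition atom_subst (s : subst) (a : atom) : atom :=
  match a with
  | ALe t1 t2 => ALe (isubst s t1) (isubst s t2)
  | AIEq t1 t2 => AIEq (isubst s t1) (isubst s t2)
  | AAEq a1 a2 => AAEq (asubst s a1) (asubst s a2)
  end.

Fixpoint fsubst (s : subst) (f : formula) : formula :=
  match f with
  | FTrue => FTrue
  | FFalse => FFalse
  | FAtom a => FAtom (atom_subst s a)
  | FNot g => FNot (fsubst s g)
  | FAnd g h => FAnd (fsubst s g) (fsubst s h)
  | FOr g h => FOr (fsubst s g) (fsubst s h)
  | FImp g h => FImp (fsubst s g) (fsubst s h)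
  | FAll i g => FAll i (fsubst (subst_remove s i) g)
  | FEx i g => FEx i (fsubst (subst_remove s i) g)
  end.

Fixpoint imap (fi : icnst -> icnst) (fa : acnst -> acnst) (t : iterm) : iterm :=
  match t with
  | IVar i => IVar i
  | ICst c => ICst (fi c)
  | INum z => INum z
  | IAdd a b => IAdd (imap fi fa a) (imap fi fa b)
  | IMul z a => IMul z (imap fi fa a)
  | ISel a u => ISel (amap fi fa a) (imap fi fa u)
  end
with amap (fi : icnst -> icnst) (fa : acnst -> acnst) (a : aterm) : aterm :=
  match a with
  | ACst c => ACst (fa c)
  | AStore b i v => AStore (amap fi fa b) (imap fi fa i) (imap fi fa v)
  end.

Definition atom_map fi fa (a : atom) : atom :=
  match a with
  | ALe t1 t2 => ALe (imap fi fa t1) (imap fi fa t2)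
  | AIEq t1 t2 => AIEq (imap fi fa t1) (imap fi fa t2)
  | AAEq a1 a2 => AAEq (amap fi fa a1) (amap fi fa a2)
  end.

Fixpoint fmap fi fa (f : formula) : formula :=
  match f with
  | FTrue => FTrue
  | FFalse => FFalse
  | FAtom a => FAtom (atom_map fi fa a)
  | FNot g => FNot (fmap fi fa g)
  | FAnd g h => FAnd (fmap fi fa g) (fmap fi fa h)
  | FOr g h => FOr (fmap fi fa g) (fmap fi fa h)
  | FImp g h => FImp (fmap fi fa g) (fmap fi fa h)
  | FAll i g => FAll i (fmap fi fa g)
  | FEx i g => FEx i (fmap fi fa g)
  end.

Definition inX (X : list cnst) (c : cnst) : bool :=
  if in_dec cnst_eq_dec c X then true else false.

Definition prime_ic (X : list cnst) (c : icnst) : icnst :=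
  match c with
  | IC false n => if inX X (CI c) then IC true n else c
  | _ => c
  end.
Definition prime_ac (X : list cnst) (c : acnst) : acnst :=
  match c with
  | AC false n => if inX X (CA c) then AC true n else c
  | _ => c
  end.
Definition unprime_ic (X : list cnst) (c : icnst) : icnst :=
  match c with
  | IC true n => if inX X (CI (IC false n)) then IC false n else c
  | _ => c
  end.
Definition unprime_ac (X : list cnst) (c : acnst) : acnst :=
  match c with
  | AC true n => if inX X (CA (AC false n)) then AC false n else c
  | _ => c
  end.

Definition prime (X : list cnst) (f : formula) : formula :=
  fmap (prime_ic X) (prime_ac X) f.
Definition unprime (X : list cnst) (f : formula) : formula :=
  fmap (unprime_ic X) (unprime_ac X) f.

Definition prime_cnst (c : cnst) : cnst :=
  match c with
  | CI (IC _ n) => CI (IC true n)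
  | CA (AC _ n) => CA (AC true n)
  | _ => c
  end.
Definition is_state_cnst (c : cnst) : Prop :=
  (exists n, c = CI (IC false n)) \/ (exists n, c = CA (AC false n)).

Definition inXp (X : list cnst) (c : cnst) : Prop :=
  exists a, In a X /\ c = prime_cnst a.

Record safety_problem : Type := {
  SX : list cnst;
  Init : formula;
  Tr : formula;
  Bad : formula
}.

Definition wf_problem (P : safety_problem) : Prop :=
  (forall c, In c (SX P) -> is_state_cnst c) /\
  ground (Init P) /\ (forall c, In c (consts (Init P)) -> In c (SX P)) /\
  ground (Bad P) /\ (forall c, In c (consts (Bad P)) -> In c (SX P)) /\
  ground (Tr P) /\
  (forall c, In c (consts (Tr P)) -> In c (SX P) \/ inXp (SX P) c).

Definition Fop (P : safety_problem) (A : formula) : formula :=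
  FOr (FAnd A (Tr P)) (prime (SX P) (Init P)).

Definition interp_seq (P : safety_problem) (I : nat -> formula) (k : nat) : Prop :=
  implies (Init P) (I 1) /\
  (forall j, 1 <= j -> j <= k - 1 ->
     implies (FAnd (I j) (Tr P)) (prime (SX P) (I (S j)))) /\
  implies (I k) (FNot (Bad P)).

Definition frame := list (formula * subst).

Definition forallQ (Q : frame) : formula :=
  fold_right (fun p acc => FAnd (uclose (fst p)) acc) FTrue Q.
Definition qi (Q : frame) : formula :=
  fold_right (fun p acc => FAnd (fsubst (snd p) (fst p)) acc) FTrue Q.

Definition abs_spec (U : cnst -> Prop) (phi psi : formula) (sigma : subst) : Prop :=
  (forall x, sigma x <> None <-> (In x (fvars psi) /\ ~ In x (fvars phi))) /\
  fsubst sigma psi = phi /\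
  (forall c, In c (consts psi) -> ~ U c) /\
  (forall x c, sigma x = Some c -> U (CI c)) /\
  (forall x y c, sigma x = Some c -> sigma y = Some c -> x = y) /\
  (forall x i, sigma x = Some (Sk i) -> x = i).

Definition agree_outside (V : cnst -> Prop) (M M' : model) : Prop :=
  (forall c, ~ V (CI c) -> mint M c = mint M' c) /\
  (forall c, ~ V (CA c) -> marr M c = marr M' c).

Definition implies_exists (psi : formula) (V : cnst -> Prop) (phi : formula) : Prop :=
  forall M r, sat M r psi -> exists M', agree_outside V M M' /\ sat M' r phi.

Definition pmbp_spec (U : cnst -> Prop) (phi : formula) (M : model)
    (psi : formula) (W : cnst -> Prop) : Prop :=
  is_monomial psi /\ ground psi /\
  (forall c, W c -> U c) /\
  (forall c, In c (consts psi) -> In c (consts phi) /\ ~ (U c /\ ~ W c)) /\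
  implies_exists psi (fun c => U c /\ ~ W c) phi /\
  models M psi /\
  (forall c, W c -> is_int_cnst c).

Definition itp_spec (A B I : formula) : Prop :=
  ground I /\
  (forall c, In c (consts I) -> In c (consts A) /\ In c (consts B)) /\
  implies A I /\ implies I (FNot B).

Definition pob := (formula * subst * nat)%type.

Record q3state : Type := {
  pobs : list pob;
  level : nat;
  frames : nat -> frame
}.

Definition init_state (P : safety_problem) : q3state :=
  {| pobs := [];
     level := 0;
     frames := fun i => if Nat.eqb i 0 then [(Init P, empty_subst)] else [] |}.

Definition add_lemma (Q : nat -> frame) (i : nat) (p : formula * subst) : nat -> frame :=
  fun j => if Nat.leb j (S i) then p :: Q j else Q j.

Definition msk (P : safety_problem) (m : formula) : formula :=
  fsubst sk_subst (prime (SX P) m).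

Inductive q3step (P : safety_problem) : q3state -> q3state -> Prop :=
| RUnfold s :
    implies (qi (frames s (level s))) (FNot (Bad P)) ->
    q3step P s {| pobs := pobs s; level := S (level s); frames := frames s |}
| RCandidate s m :
    is_monomial m -> ground m ->
    (forall c, In c (consts m) -> In c (SX P)) ->
    implies m (FAnd (qi (frames s (level s))) (Bad P)) ->
    q3step P s {| pobs := (m, empty_subst, level s) :: pobs s;
                  level := level s; frames := frames s |}
| RPredecessor s m xi i M phi U psi sigma :
    In (m, xi, S i) (pobs s) ->
    models M (FAnd (qi (frames s i)) (FAnd (Tr P) (msk P m))) ->
    pmbp_spec (fun c => inXp (SX P) c \/ is_sk c) (FAnd (Tr P) (msk P m)) M phi U ->
    abs_spec U phi psi sigma ->
    q3step P s {| pobs := (psi, sigma, i) :: pobs s;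
                  level := level s; frames := frames s |}
| RNewLemma s m sigma i L' l tau :
    i < level s ->
    In (m, sigma, S i) (pobs s) ->
    unsatisfiable (FAnd (Fop P (qi (frames s i))) (msk P m)) ->
    itp_spec (Fop P (qi (frames s i))) (msk P m) L' ->
    abs_spec is_sk (unprime (SX P) L') l tau ->
    q3step P s {| pobs := pobs s; level := level s;
                  frames := add_lemma (frames s) i (l, sigma) |}
| RPush s phi psi sigma i :
    i < level s ->
    In (FOr phi psi, sigma) (frames s i) ->
    ~ In (phi, sigma) (frames s (S i)) ->
    implies (Init P) (uclose phi) ->
    implies (FAnd (uclose phi)
               (FAnd (forallQ (frames s i)) (FAnd (qi (frames s i)) (Tr P))))
            (prime (SX P) (uclose phi)) ->
    q3step P s {| pobs := pobs s; level := level s;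
                  frames := add_lemma (frames s) i (phi, sigma) |}.

Definition reachable (P : safety_problem) (s : q3state) : Prop :=
  clos_refl_trans q3state (q3step P) (init_state P) s.

(* Quic3 maintains an invariant: every frame is implied by Init, is inductive
   relative to its predecessor (forall Q_j /\ Tr => (forall Q_(j+1))'), frames
   shrink as j grows, frame lemmas mention no Skolem constant, the frames below N
   exclude Bad, and POB monomials are over X.  For k < N these facts say exactly
   that forall Q_1, ..., forall Q_k is an interpolation sequence.
   The only rule needing an idea is NewLemma.  The interpolant L' of F(qi Q_i) and
   m'_sk mentions only X' and Skolem constants, while Init, Tr and forall Q_i
   mention no Skolem constant; so every reinterpretation of the Skolem constants
   keeps F(qi Q_i), hence L', true.  As l is L with each sk_i abstracted to v_i,
   this says that forall l holds: unprimed via the disjunct Init(X') of F, primed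
   via the disjunct qi Q_i /\ Tr. *)

From Stdlib Require Import List Arith Relations FunctionalExtensionality Lia.
Import ListNotations.

Scheme iterm_mut := Induction for iterm Sort Prop
  with aterm_mut := Induction for aterm Sort Prop.
Combined Scheme term_mut from iterm_mut, aterm_mut.

Ltac rewrite_hyps := repeat match goal with H : _ = _ |- _ => rewrite H end.

Ltac split_in :=
  repeat match goal with
  | H : In _ (_ ++ _) |- _ => apply in_app_or in H
  | H : _ \/ _ |- _ => destruct H
  end.

Definition rename_model (M : model) fi fa : model :=
  {| mint := fun c => mint M (fi c); marr := fun a => marr M (fa a) |}.

Lemma eval_rename fi fa M r :
  (forall t, ieval M r (imap fi fa t) = ieval (rename_model M fi fa) r t) /\
  (forall a, aeval M r (amap fi fa a) = aeval (rename_model M fi fa) r a).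
Proof. apply term_mut; intros; simpl; rewrite_hyps; reflexivity. Qed.

Lemma sat_rename fi fa f : forall M r,
  sat M r (fmap fi fa f) <-> sat (rename_model M fi fa) r f.
Proof.
  induction f; intros M r; simpl;
    try setoid_rewrite IHf; try setoid_rewrite IHf1; try setoid_rewrite IHf2; try tauto.
  destruct a; simpl;
    rewrite ?(proj1 (eval_rename fi fa M r)), ?(proj2 (eval_rename fi fa M r)); tauto.
Qed.

Definition subst_valuation (M : model) (s : subst) (r : valuation) : valuation :=
  fun i => match s i with Some c => mint M c | None => r i end.

Lemma subst_valuation_upd M s r i z :
  subst_valuation M (subst_remove s i) (upd r i z) = upd (subst_valuation M s r) i z.
Proof.
  extensionality x; unfold subst_valuation, subst_remove, upd.
  destruct (Nat.eqb x i); reflexivity.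
Qed.

Lemma eval_subst M s r :
  (forall t, ieval M r (isubst s t) = ieval M (subst_valuation M s r) t) /\
  (forall a, aeval M r (asubst s a) = aeval M (subst_valuation M s r) a).
Proof.
  apply term_mut; intros; simpl; rewrite_hyps; try reflexivity.
  unfold subst_valuation; destruct (s i); reflexivity.
Qed.

Lemma sat_fsubst M f : forall s r,
  sat M r (fsubst s f) <-> sat M (subst_valuation M s r) f.
Proof.
  induction f; intros s r; simpl;
    try setoid_rewrite IHf; try setoid_rewrite IHf1; try setoid_rewrite IHf2;
    try setoid_rewrite subst_valuation_upd; try tauto.
  destruct a; simpl;
    rewrite ?(proj1 (eval_subst M s r)), ?(proj2 (eval_subst M s r)); tauto.
Qed.

Definition agree_on (cs : list cnst) (M N : model) : Prop :=
  forall c, In c cs ->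
    match c with CI k => mint M k = mint N k | CA a => marr M a = marr N a end.

Lemma agree_on_app cs1 cs2 M N :
  agree_on (cs1 ++ cs2) M N -> agree_on cs1 M N /\ agree_on cs2 M N.
Proof. intros H; split; intros c Hc; apply H, in_or_app; auto. Qed.

Ltac use_agreement :=
  repeat match goal with
  | H : agree_on (_ ++ _) _ _ |- _ => apply agree_on_app in H as [? ?]
  | IH : agree_on ?l _ _ -> _ = _, H : agree_on ?l _ _ |- _ => rewrite (IH H); clear IH
  end.

Lemma eval_agree M N r :
  (forall t, agree_on (iconsts t) M N -> ieval M r t = ieval N r t) /\
  (forall a, agree_on (aconsts a) M N -> aeval M r a = aeval N r a).
Proof.
  apply term_mut; intros; simpl in *; use_agreement; try reflexivity.
  - exact (H (CI c) (or_introl eq_refl)).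
  - exact (H (CA c) (or_introl eq_refl)).
Qed.

Lemma sat_agree M N f : agree_on (consts f) M N -> forall r, sat M r f <-> sat N r f.
Proof.
  induction f; simpl; intros Hag r; use_agreement;
    try (specialize (IHf Hag); setoid_rewrite IHf);
    try (specialize (IHf1 H); specialize (IHf2 H0); setoid_rewrite IHf1; setoid_rewrite IHf2);
    try tauto.
  destruct a; simpl in *; use_agreement;
    rewrite ?(proj1 (eval_agree M N r) _ H), ?(proj1 (eval_agree M N r) _ H0),
      ?(proj2 (eval_agree M N r) _ H), ?(proj2 (eval_agree M N r) _ H0); tauto.
Qed.

Lemma eval_fvars_ext M r r' :
  (forall t, (forall x, In x (ivars t) -> r x = r' x) -> ieval M r t = ieval M r' t) /\
  (forall a, (forall x, In x (avars a) -> r x = r' x) -> aeval M r a = aeval M r' a).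
Proof.
  apply term_mut; intros; simpl in *;
    repeat match goal with
    | IH : (forall x, In x ?l -> _) -> _ = _ |- _ =>
        rewrite IH by (intros; auto 6 using in_or_app); clear IH
    end; auto.
Qed.

Lemma upd_agree r r' i z l :
  (forall x, In x (remove Nat.eq_dec i l) -> r x = r' x) ->
  forall x, In x l -> upd r i z x = upd r' i z x.
Proof.
  intros H x Hx; unfold upd.
  destruct (Nat.eqb_spec x i); auto using in_in_remove.
Qed.

Lemma sat_fvars_ext M f : forall r r',
  (forall x, In x (fvars f) -> r x = r' x) -> (sat M r f <-> sat M r' f).
Proof.
  induction f; intros r r' H; simpl in *; try tauto.
  - destruct a; simpl in *;
      rewrite ?(proj1 (eval_fvars_ext M r r') t1), ?(proj1 (eval_fvars_ext M r r') t2),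
        ?(proj2 (eval_fvars_ext M r r') a1), ?(proj2 (eval_fvars_ext M r r') a2)
        by (intros; auto using in_or_app); tauto.
  - rewrite (IHf r r'); tauto.
  - rewrite (IHf1 r r'), (IHf2 r r') by auto using in_or_app; tauto.
  - rewrite (IHf1 r r'), (IHf2 r r') by auto using in_or_app; tauto.
  - rewrite (IHf1 r r'), (IHf2 r r') by auto using in_or_app; tauto.
  - setoid_rewrite (fun z => IHf (upd r i z) (upd r' i z) (upd_agree r r' i z _ H)); tauto.
  - setoid_rewrite (fun z => IHf (upd r i z) (upd r' i z) (upd_agree r r' i z _ H)); tauto.
Qed.

Lemma sat_fold_all_elim M f l : forall r, sat M r (fold_right FAll f l) ->
  forall r', (forall x, ~ In x l -> r' x = r x) -> sat M r' f.
Proof.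
  induction l as [|i l IH]; simpl; intros r H r' Hr.
  - apply (sat_fvars_ext M f r r'); auto.
    intros x _; symmetry; apply Hr; tauto.
  - apply (IH _ (H (r' i))); intros x Hx; unfold upd.
    destruct (Nat.eqb_spec x i) as [->|]; auto.
    apply Hr; intros [E|E]; congruence.
Qed.

Lemma sat_uclose M r f : sat M r (uclose f) <-> forall r', sat M r' f.
Proof.
  split.
  - intros H r'.
    set (r2 := fun x => if in_dec Nat.eq_dec x (fvars f) then r' x else r x).
    apply (sat_fvars_ext M f r2 r'); [intros x Hx; unfold r2; destruct in_dec; tauto|].
    apply (sat_fold_all_elim M f (fvars f) r H).
    intros x Hx; unfold r2; destruct in_dec; tauto.
  - intros H; unfold uclose; generalize (fvars f) r.
    induction l; simpl; auto.
Qed.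

Lemma consts_uclose f : consts (uclose f) = consts f.
Proof. unfold uclose; induction (fvars f); simpl; auto. Qed.

Lemma vars_rename fi fa :
  (forall t, ivars (imap fi fa t) = ivars t) /\ (forall a, avars (amap fi fa a) = avars a).
Proof. apply term_mut; intros; simpl; rewrite_hyps; reflexivity. Qed.

Lemma fvars_fmap fi fa f : fvars (fmap fi fa f) = fvars f.
Proof.
  induction f; simpl; rewrite_hyps; auto.
  destruct a; simpl; rewrite ?(proj1 (vars_rename fi fa)), ?(proj2 (vars_rename fi fa)); auto.
Qed.

Definition cmap fi fa (c : cnst) : cnst :=
  match c with CI k => CI (fi k) | CA a => CA (fa a) end.

Ltac use_rename_hyps :=
  repeat match goal with
  | IH : forall c, In c ?l -> exists _, _, H : In _ ?l |- _ =>
      destruct (IH _ H) as [? [? ->]]; clear IH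
  end.

Lemma consts_rename_terms fi fa :
  (forall t c, In c (iconsts (imap fi fa t)) -> exists c0, In c0 (iconsts t) /\ c = cmap fi fa c0) /\
  (forall a c, In c (aconsts (amap fi fa a)) -> exists c0, In c0 (aconsts a) /\ c = cmap fi fa c0).
Proof.
  apply term_mut; intros; simpl in *; split_in; use_rename_hyps; subst; try tauto;
    eauto 7 using in_or_app.
Qed.

Lemma consts_fmap fi fa f c :
  In c (consts (fmap fi fa f)) -> exists c0, In c0 (consts f) /\ c = cmap fi fa c0.
Proof.
  pose proof (consts_rename_terms fi fa) as [Ht Ha].
  revert c; induction f; intros c H; simpl in *; split_in; use_rename_hyps;
    eauto using in_or_app; try tauto.
  destruct a; simpl in *; split_in;
    first [destruct (Ht _ _ H) as [? [? ->]] | destruct (Ha _ _ H) as [? [? ->]]];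
    eauto using in_or_app.
Qed.

Lemma consts_subst_terms s :
  (forall t c, In c (iconsts t) -> In c (iconsts (isubst s t))) /\
  (forall a c, In c (aconsts a) -> In c (aconsts (asubst s a))).
Proof. apply term_mut; intros; simpl in *; split_in; auto 6 using in_or_app; tauto. Qed.

Lemma consts_fsubst_incl s f c : In c (consts f) -> In c (consts (fsubst s f)).
Proof.
  revert s c; induction f; intros s c H; simpl in *; split_in; auto using in_or_app.
  destruct a; simpl in *; split_in; apply in_or_app;
    [left|right|left|right|left|right]; apply (consts_subst_terms s); auto.
Qed.

Definition in_range (s : subst) (c : cnst) : Prop := exists i k, s i = Some k /\ c = CI k.

Lemma in_range_remove s i c : in_range (subst_remove s i) c -> in_range s c.
Proof.
  intros (j & k & E & ->); exists j, k; split; auto.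
  unfold subst_remove in E; destruct (Nat.eqb j i); congruence.
Qed.

Ltac use_subst_hyps :=
  repeat match goal with
  | IH : forall c, In c ?l -> _ \/ _, H : In _ ?l |- _ => destruct (IH _ H); clear IH
  end.

Lemma consts_subst_terms_inv s :
  (forall t c, In c (iconsts (isubst s t)) -> In c (iconsts t) \/ in_range s c) /\
  (forall a c, In c (aconsts (asubst s a)) -> In c (aconsts a) \/ in_range s c).
Proof.
  apply term_mut; intros; simpl in *; split_in; use_subst_hyps; auto 7 using in_or_app.
  destruct (s i) eqn:E; simpl in *; [|tauto].
  destruct H as [<-|[]]; right; exists i, i0; auto.
Qed.

Lemma consts_fsubst s f c : In c (consts (fsubst s f)) -> In c (consts f) \/ in_range s c.
Proof.
  revert s c; induction f; intros s c H; simpl in *; split_in;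
    try (destruct (IHf _ _ H); [|right; apply (in_range_remove _ i)]);
    try (destruct (IHf1 _ _ H)); try (destruct (IHf2 _ _ H)); auto using in_or_app.
  destruct a; simpl in *; split_in;
    first [ destruct (proj1 (consts_subst_terms_inv s) _ _ H)
          | destruct (proj2 (consts_subst_terms_inv s) _ _ H) ]; auto using in_or_app.
Qed.

Lemma sat_forallQ M r Q :
  sat M r (forallQ Q) <-> forall p, In p Q -> sat M r (uclose (fst p)).
Proof.
  induction Q as [|q Q IH]; simpl; [tauto|].
  rewrite IH; split; [intros [Hq HQ] p [<-|Hp]; auto | auto].
Qed.

Lemma forallQ_incl M r Q Q' : incl Q Q' -> sat M r (forallQ Q') -> sat M r (forallQ Q).
Proof. rewrite !sat_forallQ; auto. Qed.

Lemma forallQ_qi M r Q : sat M r (forallQ Q) -> sat M r (qi Q).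
Proof.
  induction Q as [|q Q IH]; simpl; auto.
  intros [Hq HQ]; split; auto.
  apply sat_fsubst; eapply sat_uclose; eauto.
Qed.

Lemma sat_forallQ_add_lemma M r Q i p j :
  sat M r (forallQ (add_lemma Q i p j)) <->
  (j <= S i -> sat M r (uclose (fst p))) /\ sat M r (forallQ (Q j)).
Proof.
  unfold add_lemma; destruct (Nat.leb_spec j (S i)); simpl.
  - intuition.
  - intuition lia.
Qed.

Lemma incl_add_lemma_succ (Q : nat -> frame) i p :
  (forall j, incl (Q (S j)) (Q j)) -> forall j, incl (add_lemma Q i p (S j)) (add_lemma Q i p j).
Proof.
  intros HQ j; unfold add_lemma.
  destruct (Nat.leb_spec (S j) (S i)), (Nat.leb_spec j (S i)); try lia;
    auto using incl_cons_inv, incl_tl, incl_cons, in_eq.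
Qed.

Lemma incl_frames_le (Q : nat -> frame) :
  (forall j, incl (Q (S j)) (Q j)) -> forall j i, j <= i -> incl (Q i) (Q j).
Proof. intros HQ j i Hle; induction Hle; eauto using incl_refl, incl_tran. Qed.

Definition prime_model (X : list cnst) (M : model) : model :=
  rename_model M (prime_ic X) (prime_ac X).
Definition unprime_model (X : list cnst) (M : model) : model :=
  rename_model M (unprime_ic X) (unprime_ac X).

Lemma sat_prime X M r f : sat M r (prime X f) <-> sat (prime_model X M) r f.
Proof. apply sat_rename. Qed.

Lemma sat_unprime X M r f : sat M r (unprime X f) <-> sat (unprime_model X M) r f.
Proof. apply sat_rename. Qed.

Lemma sat_rename_rename_id M fi fa gi ga f :
  (forall c, In c (consts f) -> cmap gi ga (cmap fi fa c) = c) ->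
  forall r, sat (rename_model (rename_model M gi ga) fi fa) r f <-> sat M r f.
Proof.
  intros H; apply sat_agree; intros [k|a] Hc; specialize (H _ Hc);
    simpl in *; injection H as ->; reflexivity.
Qed.

Definition sk_free (f : formula) : Prop := forall c, In c (consts f) -> ~ is_sk c.

Definition sk_update (M : model) (r : valuation) : model :=
  {| mint := fun c => match c with Sk x => r x | _ => mint M c end; marr := marr M |}.

Lemma sat_sk_update M r' f :
  sk_free f -> forall r, sat (sk_update M r') r f <-> sat M r f.
Proof.
  intros H; apply sat_agree; intros [[x|b n]|a] Hc; simpl; auto.
  exfalso; apply (H _ Hc); exists x; reflexivity.
Qed.

Lemma sk_update_prime_model X M r' :
  sk_update (prime_model X M) r' = prime_model X (sk_update M r').
Proof.
  unfold sk_update, prime_model, rename_model; simpl; f_equal.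
  extensionality c; destruct c as [x|[] n]; simpl; try destruct (inX X _); reflexivity.
Qed.

(* In phi = l tau each variable v_x of l stands for sk_x, so phi read with sk_x
   interpreted as r' x says that l holds under r'. *)
Lemma sat_abs_sk M r r' phi l tau :
  fvars phi = [] -> abs_spec is_sk phi l tau -> sat (sk_update M r') r phi -> sat M r' l.
Proof.
  intros Hphi (Hdom & Hsub & Hnosk & Hrange & _ & Hsk) H.
  rewrite <- Hsub, sat_fsubst in H.
  apply (sat_sk_update M r' l Hnosk).
  apply (sat_fvars_ext _ l _ r' ) in H; auto.
  intros x Hx; unfold subst_valuation.
  destruct (tau x) as [k|] eqn:E.
  - destruct (Hrange _ _ E) as [j Ej]; injection Ej as ->.
    rewrite (Hsk _ _ E); reflexivity.
  - exfalso; apply (proj2 (Hdom x)); [rewrite Hphi; auto|exact E].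
Qed.

Section WellFormed.

Variable P : safety_problem.
Hypothesis wfP : wf_problem P.

Notation X := (SX P).

Definition over_X (f : formula) : Prop := forall c, In c (consts f) -> In c X.
Definition primed_or_sk (c : cnst) : Prop := inXp X c \/ is_sk c.

Lemma inX_true c : In c X -> inX X c = true.
Proof. unfold inX; destruct in_dec; tauto. Qed.

Lemma prime_state c : In c X -> cmap (prime_ic X) (prime_ac X) c = prime_cnst c.
Proof.
  intros Hc; destruct (proj1 wfP c Hc) as [[n ->]|[n ->]]; simpl;
    rewrite inX_true; auto.
Qed.

Lemma unprime_prime_state c : In c X -> cmap (unprime_ic X) (unprime_ac X) (prime_cnst c) = c.
Proof.
  intros Hc; destruct (proj1 wfP c Hc) as [[n ->]|[n ->]]; simpl;
    rewrite inX_true; auto.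
Qed.

Lemma state_not_sk c : In c X -> ~ is_sk c.
Proof. intros Hc [i ->]; destruct (proj1 wfP _ Hc) as [[n E]|[n E]]; discriminate. Qed.

Lemma primed_state_not_sk c : inXp X c -> ~ is_sk c.
Proof.
  intros (a & Ha & ->) [i E]; destruct (proj1 wfP _ Ha) as [[n ->]|[n ->]]; discriminate.
Qed.

Lemma Init_over_X : over_X (Init P).
Proof. pose proof wfP as (_ & _ & HI & _); exact HI. Qed.

Lemma Init_sk_free : sk_free (Init P).
Proof. intros c Hc; auto using Init_over_X, state_not_sk. Qed.

Lemma Tr_sk_free : sk_free (Tr P).
Proof.
  pose proof wfP as (_ & _ & _ & _ & _ & _ & HT).
  intros c Hc; destruct (HT c Hc); auto using state_not_sk, primed_state_not_sk.
Qed.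

Lemma sat_prime_unprime_model M f :
  over_X f -> forall r, sat (prime_model X (unprime_model X M)) r f <-> sat M r f.
Proof.
  intros Hf; apply sat_rename_rename_id; intros c Hc.
  rewrite prime_state by auto; apply unprime_prime_state; auto.
Qed.

Lemma sat_unprime_prime_model M f :
  (forall c, In c (consts f) -> primed_or_sk c) ->
  forall r, sat (unprime_model X (prime_model X M)) r f <-> sat M r f.
Proof.
  intros Hf; apply sat_rename_rename_id; intros c Hc.
  destruct (Hf c Hc) as [(a & Ha & ->)|[i ->]]; [|reflexivity].
  rewrite unprime_prime_state, prime_state; auto.
Qed.

Lemma consts_msk m c : over_X m -> In c (consts (msk P m)) -> primed_or_sk c.
Proof.
  intros Hm Hc; unfold msk in Hc.
  destruct (consts_fsubst _ _ _ Hc) as [Hp|(i & k & E & ->)].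
  - destruct (consts_fmap _ _ _ _ Hp) as (c0 & Hc0 & ->).
    left; exists c0; split; auto; apply prime_state; auto.
  - right; exists i; unfold sk_subst in E; congruence.
Qed.

Lemma interpolant_init A L' l tau :
  ground L' -> implies (Fop P A) L' -> abs_spec is_sk (unprime X L') l tau ->
  implies (Init P) (uclose l).
Proof.
  intros [_ HL] HA Habs M r HI; apply sat_uclose; intros r'.
  apply (sat_abs_sk M r r' (unprime X L') l tau); auto.
  - unfold unprime; rewrite fvars_fmap; exact HL.
  - apply sat_unprime, HA; simpl; right.
    apply sat_prime, sat_prime_unprime_model; [apply Init_over_X|].
    apply sat_sk_update; auto using Init_sk_free.
Qed.

Lemma interpolant_consecution Q L' l tau :
  (forall p, In p Q -> sk_free (fst p)) ->
  ground L' -> implies (Fop P (qi Q)) L' ->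
  (forall c, In c (consts L') -> primed_or_sk c) ->
  abs_spec is_sk (unprime X L') l tau ->
  implies (FAnd (forallQ Q) (Tr P)) (prime X (uclose l)).
Proof.
  intros HQ [_ HL] HA HLc Habs M r [HfQ HTr].
  apply sat_prime, sat_uclose; intros r'.
  apply (sat_abs_sk _ r r' (unprime X L') l tau); auto.
  - unfold unprime; rewrite fvars_fmap; exact HL.
  - rewrite sk_update_prime_model, sat_unprime, sat_unprime_prime_model by auto.
    apply HA; simpl; left; split.
    + apply forallQ_qi, sat_forallQ; intros p Hp.
      apply sat_sk_update; [intros c; rewrite consts_uclose; apply (HQ p Hp)|].
      exact (proj1 (sat_forallQ M r Q) HfQ p Hp).
    + apply sat_sk_update; auto using Tr_sk_free.
Qed.

Lemma predecessor_over_X m M phi W psi sigma :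
  over_X m -> pmbp_spec primed_or_sk (FAnd (Tr P) (msk P m)) M phi W ->
  abs_spec W phi psi sigma -> over_X psi.
Proof.
  pose proof wfP as (_ & _ & _ & _ & _ & _ & HT).
  intros Hm (_ & _ & _ & Hcp & _) (_ & Hsub & HnW & _) c Hc.
  assert (Hphi : In c (consts phi)) by (rewrite <- Hsub; apply consts_fsubst_incl; auto).
  destruct (Hcp c Hphi) as [Hc' HnU].
  assert (Hnp : ~ primed_or_sk c) by (intro; apply HnU; split; auto; apply HnW; auto).
  simpl in Hc'; apply in_app_or in Hc' as [Hc'|Hc'].
  - destruct (HT c Hc'); [auto|exfalso; apply Hnp; left; auto].
  - exfalso; apply Hnp, (consts_msk m); auto.
Qed.

Record frames_invariant (Q : nat -> frame) : Prop := {
  frames_init : forall j, implies (Init P) (forallQ (Q j));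
  frames_consecution : forall j,
    implies (FAnd (forallQ (Q j)) (Tr P)) (prime X (forallQ (Q (S j))));
  frames_incl_succ : forall j, incl (Q (S j)) (Q j);
  frames_sk_free : forall j p, In p (Q j) -> sk_free (fst p)
}.

Lemma frames_invariant_add_lemma Q i p :
  frames_invariant Q ->
  implies (Init P) (uclose (fst p)) ->
  (forall M r, sat M r (uclose (fst p)) -> sat M r (forallQ (Q i)) -> sat M r (Tr P) ->
     sat M r (prime X (uclose (fst p)))) ->
  sk_free (fst p) ->
  frames_invariant (add_lemma Q i p).
Proof.
  intros [Hinit Hcons Hincl Hsk] HpI HpT Hpsk; split.
  - intros j M r H; apply sat_forallQ_add_lemma; split; [intros _; apply HpI|apply (Hinit j)]; auto.
  - intros j M r [HQj HTr]; apply sat_forallQ_add_lemma in HQj as [Hpj HQj].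
    apply sat_prime, sat_forallQ_add_lemma; split.
    + intros Hle; apply sat_prime, HpT; auto; [apply Hpj; lia|].
      apply forallQ_incl with (Q j); auto.
      apply incl_frames_le; auto; lia.
    + apply sat_prime, (Hcons j); simpl; auto.
  - apply incl_add_lemma_succ; auto.
  - intros j q Hq; unfold add_lemma in Hq.
    destruct (Nat.leb j (S i)); [destruct Hq as [<-|Hq]|]; eauto.
Qed.

Record invariant (s : q3state) : Prop := {
  inv_frames : frames_invariant (frames s);
  inv_safe : forall k, k < level s -> implies (forallQ (frames s k)) (FNot (Bad P));
  inv_pobs : forall m sg i, In (m, sg, i) (pobs s) -> over_X m
}.

Lemma invariant_init_state : invariant (init_state P).
Proof.
  pose proof wfP as (_ & [_ HIv] & _).
  split; [split| |]; simpl.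
  - intros [|j] M r H; simpl; auto.
    split; auto; apply sat_uclose; intros r'.
    apply (sat_fvars_ext M _ r r'); auto; rewrite HIv; simpl; tauto.
  - intros j M r _; exact I.
  - intros j p [].
  - intros [|j] p Hp; simpl in Hp; [destruct Hp as [<-|[]]|tauto].
    apply Init_sk_free.
  - intros k Hk; lia.
  - intros m sg i [].
Qed.

Lemma invariant_add_lemma s i p :
  invariant s -> frames_invariant (add_lemma (frames s) i p) ->
  invariant {| pobs := pobs s; level := level s; frames := add_lemma (frames s) i p |}.
Proof.
  intros [_ Hsafe Hpobs] Hframes; split; simpl; auto.
  intros k Hk M r H; apply sat_forallQ_add_lemma in H as [_ H]; apply (Hsafe k); auto.
Qed.

Lemma invariant_step s s' : invariant s -> q3step P s s' -> invariant s'.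
Proof.
  intros Hs Hstep; pose proof Hs as [Hframes Hsafe Hpobs].
  destruct Hstep as [s Hunfold | s m _ _ Hm _ | s m xi i M phi U psi sigma Hpob _ Hmbp Habs
                    | s m sigma i L' l tau _ Hpob _ Hitp Habs | s phi psi sigma i _ Hin _ HpI HpT].
  - split; simpl; auto.
    intros k Hk M r HQ; destruct (Nat.eq_dec k (level s)) as [->|]; [|apply (Hsafe k); auto; lia].
    apply Hunfold, forallQ_qi; auto.
  - split; simpl; auto.
    intros m0 sg i [E|Hin]; [injection E as -> _ _; exact Hm|eauto].
  - split; simpl; auto.
    intros m0 sg i0 [E|Hin]; [injection E as -> _ _|eauto].
    eapply predecessor_over_X; eauto.
  - pose proof Hitp as (HLg & HLc & HLa & _).
    pose proof Habs as (_ & _ & Hl_sk_free & _).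
    apply invariant_add_lemma; [exact Hs|].
    apply frames_invariant_add_lemma; simpl; [exact Hframes| | |exact Hl_sk_free].
    + eapply interpolant_init; eauto.
    + intros M r _ HQ HTr; eapply interpolant_consecution; simpl; eauto using frames_sk_free.
      intros c Hc; apply (consts_msk m); [eauto|apply HLc; auto].
  - apply invariant_add_lemma; [exact Hs|].
    apply frames_invariant_add_lemma; simpl; auto.
    + intros M r Hphi HQ HTr; apply HpT; simpl; auto using forallQ_qi.
    + intros c Hc; apply (frames_sk_free _ Hframes i _ Hin); simpl; auto using in_or_app.
Qed.

Lemma invariant_reachable s : reachable P s -> invariant s.
Proof.
  intros Hreach; apply clos_rt_rtn1 in Hreach.
  induction Hreach; eauto using invariant_init_state, invariant_step.
Qed.

End WellFormed.

Theorem lemma4 (P : safety_problem) (s : q3state) :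
  wf_problem P ->
  reachable P s ->
  forall k, 1 <= k -> k < level s ->
    interp_seq P (fun j => forallQ (frames s j)) k.
Proof.
  intros wfP Hreach k _ Hk.
  destruct (invariant_reachable P wfP s Hreach) as [[Hinit Hcons _ _] Hsafe _].
  split; [apply Hinit|split; [intros j _ _; apply Hcons|apply Hsafe, Hk]].
Qed.
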